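(* (a) For the star graph $S_n$ on $n\ge 2$ vertices (one center adjacent to $n-1$ leaves), $\gamma(S_n)=\dfrac{n}{2n-3}$. (b) For the complete bipartite graph $K_{m,n}$ with part sizes $m\ge n\ge 1$, $\gamma(K_{m,n})=\dfrac{m+n}{2m+n-2}$.
   Context: For a finite simple undirected graph $G$ with $N$ vertices, let $\mathcal{F}=\{x\in\mathbb{R}^{V(G)} : \sum_{v} x_v = 0,\ \|x\|_\infty = 1\}$, for $x\in\mathcal{F}$ let $\gamma_x(G)=\max_{uv\in E(G)}|x_u-x_v|$, and $\gamma(G)=\min_{x\in\mathcal{F}}\gamma_x(G)$. *)

From mathcomp Require Import all_boot all_order all_algebra.
From mathcomp Require Import reals.
Set Implicit Arguments. Unset Strict Implicit. Unset Printing Implicit Defensive.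
Import Order.TTheory GRing.Theory Num.Theory.
Local Open Scope ring_scope.

Definition simple_graph (T : finType) (e : rel T) : Prop :=
  symmetric e /\ irreflexive e.

Definition sup_norm (R : realType) (T : finType) (x : T -> R) : R :=
  \big[Num.max/0]_(v : T) `|x v|.

Definition inF (R : realType) (T : finType) (x : T -> R) : Prop :=
  \sum_(v : T) x v = 0 /\ sup_norm x = 1.

Definition gamma_x (R : realType) (T : finType) (e : rel T) (x : T -> R) : R :=
  \big[Num.max/0]_(p : T * T | e p.1 p.2) `|x p.1 - x p.2|.

Definition is_gamma (R : realType) (T : finType) (e : rel T) (g : R) : Prop :=
  (exists x : T -> R, inF x /\ gamma_x e x = g) /\
  (forall x : T -> R, inF x -> g <= gamma_x e x).

Definition star (n : nat) : rel 'I_n :=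
  fun u v => (val u == 0%N) != (val v == 0%N).

Definition Kbip (m n : nat) : rel ('I_m + 'I_n)%type :=
  fun u v => match u, v with
             | inl _, inr _ => true
             | inr _, inl _ => true
             | _, _ => false
             end.
Arguments star n : clear implicits.
Arguments Kbip m n : clear implicits.

(* If |x_w| = 1 and d is the graph distance, then #|V| = |sum_v (x_w - x_v)| is at most
   sum_v d(w,v) * gamma_x, so gamma_x is at least #|V| divided by the transmission
   t(w) = sum_v d(w,v).  When the diameter is at most 2, t(w) = 2(#|V| - 1) - deg w is
   largest at a vertex w0 of minimum degree.  Conversely x_v = 1 - #|V| d(w0,v) / t(w0)
   has zero sum and sup-norm 1, and if every edge has exactly one end adjacent to w0 it
   changes by exactly #|V| / t(w0) along each edge.  The star (with w0 a leaf) and K_{m,n}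
   (with w0 on the side of size m) are such graphs, of minimum degree 1 and n. *)

From mathcomp Require Import all_boot all_order all_algebra.
From mathcomp Require Import reals ring lra zify.
Set Implicit Arguments. Unset Strict Implicit. Unset Printing Implicit Defensive.
Import Order.TTheory GRing.Theory Num.Theory.
Local Open Scope ring_scope.

Section GammaX.
Variables (R : realType) (T : finType) (e : rel T).
Implicit Types (x : T -> R) (u v w : T).

Lemma gamma_x_ge0 x : 0 <= gamma_x e x.
Proof. exact: bigmax_ge_id. Qed.

Lemma ler_gamma_x x u v : e u v -> `|x u - x v| <= gamma_x e x.
Proof. by move=> euv; apply: (le_bigmax_cond _ (j := (u, v))). Qed.

Lemma gamma_x_eq x g : 0 <= g -> (exists u v, e u v) ->
  (forall u v, e u v -> `|x u - x v| = g) -> gamma_x e x = g.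
Proof.
move=> g_ge0 [u [v euv]] xe; apply/eqP; rewrite eq_le; apply/andP; split.
  by apply: bigmax_le => // p /xe ->.
by rewrite -(xe u v euv) ler_gamma_x.
Qed.

Lemma sup_norm_eq1 x w : (forall v, `|x v| <= 1) -> `|x w| = 1 -> sup_norm x = 1.
Proof.
move=> x_le1 xw; apply/eqP; rewrite eq_le; apply/andP; split.
  by apply: bigmax_le.
by rewrite -xw (le_bigmax _ (fun v => `|x v|)).
Qed.

Lemma inF_norm_eq1 x : inF x -> exists w, `|x w| = 1.
Proof.
case=> _; rewrite /sup_norm; case: (pickP T) => [j _|T0].
  have [w _ ->] :=
    @eq_bigmax _ _ _ 0 j xpredT (fun v => `|x v|) isT (fun _ _ => normr_ge0 _).
  by exists w.
by rewrite big_pred0 // => /eqP; rewrite eq_sym oner_eq0.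
Qed.

End GammaX.

Lemma sum_nat_bool_card (T : finType) (P : pred T) : (\sum_v P v)%N = #|P|.
Proof.
rewrite -sum1_card [RHS]big_mkcond /=; apply: eq_bigr => v _.
by rewrite unfold_in; case: (P v).
Qed.

Definition degree (T : finType) (e : rel T) (w : T) : nat := #|e w|.

Section DiameterTwo.
Variables (T : finType) (e : rel T).
Hypothesis e_simple : simple_graph e.
Hypothesis diameter2 : forall u v : T, u != v -> ~~ e u v -> exists c, e u c && e c v.
Implicit Types (u v w : T).

(* This is the graph distance since the diameter is at most 2. *)
Definition gdist u v : nat := if u == v then 0%N else if e u v then 1%N else 2%N.

Definition transmission w : nat := \sum_v gdist w v.

Lemma dist_le_gdist (R : realType) (x : T -> R) u v :
  `|x u - x v| <= (gdist u v)%:R * gamma_x e x.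
Proof.
rewrite /gdist; case: eqVneq => [->|neq_uv]; first by rewrite subrr normr0 mul0r.
case: ifP => [euv|/negbT neuv]; first by rewrite mul1r ler_gamma_x.
have [c /andP[euc ecv]] := @diameter2 u v neq_uv neuv.
apply: le_trans (ler_distD (x c) _ _) _.
by rewrite mulr2n mulrDl mul1r lerD // ler_gamma_x.
Qed.

Lemma transmission_degree w : (transmission w + degree e w = 2 * #|T|.-1)%N.
Proof.
have [_ e_irr] := e_simple.
rewrite /transmission /degree -sum_nat_bool_card -big_split /= -(cardC1 w).
rewrite -sum_nat_bool_card big_distrr /=; apply: eq_bigr => v _.
rewrite /gdist eq_sym; case: eqVneq => [->|_]; first by rewrite e_irr.
by case: (e w v).
Qed.

Lemma transmission_lower_bound w v :
  (#|T|.-1 + (gdist w v).-1 <= transmission w)%N.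
Proof.
rewrite -(cardC1 w) -sum_nat_bool_card.
have -> : (gdist w v).-1 = (\sum_u (u == v) * (gdist w v).-1)%N.
  by rewrite (bigD1 v) //= eqxx mul1n big1 ?addn0 // => u /negbTE ->.
rewrite -big_split /=; apply: leq_sum => u _; rewrite /gdist eq_sym.
case: (eqVneq u v) => [->|_]; case: eqVneq => //= _.
- by case: (e w v).
- by case: (e w u).
Qed.

Lemma inF_transmission_gamma_x (R : realType) (x : T -> R) : inF x ->
  exists w, #|T|%:R <= (transmission w)%:R * gamma_x e x.
Proof.
move=> xF; have [w xw] := inF_norm_eq1 xF; exists w.
have -> : (#|T|%:R : R) = `|\sum_v (x w - x v)|.
  by rewrite sumrB xF.1 subr0 sumr_const normrMn xw.
rewrite /transmission natr_sum mulr_suml.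
apply: le_trans (ler_norm_sum _ _ _) _.
by apply: ler_sum => v _; apply: dist_le_gdist.
Qed.

Hypothesis card_gt1 : (1 < #|T|)%N.

Lemma transmission_gt0 w : (0 < transmission w)%N.
Proof. by have := transmission_lower_bound w w; lia. Qed.

Lemma card_gdist_le_transmission w v : (#|T| * gdist w v <= 2 * transmission w)%N.
Proof.
have := transmission_lower_bound w v.
have : (gdist w v <= 2)%N by rewrite /gdist; case: ifP => //; case: ifP.
move: card_gt1; set N := #|T|.
by case: (gdist w v) => [|[|[|d]]] //=; lia.
Qed.

Lemma exists_neighbour w : exists v, e w v.
Proof.
have /card_gt0P[v /= neq_vw] : (0 < #|predC1 w|)%N.
  by rewrite cardC1; move: card_gt1; set N := #|T|; lia.
case ewv: (e w v); first by exists v.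
have [|c /andP[ewc _]] := @diameter2 w v _ (negbT ewv); first by rewrite eq_sym.
by exists c.
Qed.

Variable w0 : T.
Hypothesis nbhd_splits_edges : forall u v, e u v -> e w0 u != e w0 v.

Lemma gdist_edge (R : realType) u v : e u v ->
  `|(gdist w0 u)%:R - (gdist w0 v)%:R : R| = 1.
Proof.
have [e_sym e_irr] := e_simple.
move=> euv; have := nbhd_splits_edges euv; rewrite /gdist.
case: (eqVneq w0 u) => [eq_w0u|_]; case: (eqVneq w0 v) => [eq_w0v|_].
- by move: euv; rewrite -eq_w0u -eq_w0v e_irr.
- by rewrite eq_w0u euv sub0r normrN normr1.
- by rewrite eq_w0v e_sym euv subr0 normr1.
- case: (e w0 u); case: (e w0 v) => //= _.
    by rewrite distrC -natrB // normr1.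
  by rewrite -natrB // normr1.
Qed.

Definition extremal_vector (R : realType) : T -> R :=
  fun v => 1 - #|T|%:R / (transmission w0)%:R * (gdist w0 v)%:R.

Lemma extremal_vector_inF (R : realType) :
  inF (extremal_vector R) /\
  gamma_x e (extremal_vector R) = #|T|%:R / (transmission w0)%:R.
Proof.
set g : R := #|T|%:R / _.
have t_gt0 : 0 < (transmission w0)%:R :> R by rewrite ltr0n transmission_gt0.
have g_ge0 : 0 <= g by rewrite divr_ge0 // ltW.
have gdist_w0 : gdist w0 w0 = 0%N by rewrite /gdist eqxx.
split; first split.
- rewrite sumrB sumr_const -mulr_sumr -natr_sum -/(transmission w0) divfK.
    by rewrite subrr.
  by rewrite gt_eqF.
- apply: (sup_norm_eq1 (w := w0)) => [v|]; last first.
    by rewrite /extremal_vector gdist_w0 mulr0 subr0 normr1.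
  rewrite ler_norml /extremal_vector -/g.
  have : g * (gdist w0 v)%:R <= 2.
    rewrite /g mulrAC ler_pdivrMr // -natrM -natrM ler_nat.
    exact: card_gdist_le_transmission.
  have : 0 <= g * (gdist w0 v)%:R by rewrite mulr_ge0.
  lra.
- have [v ew0v] := exists_neighbour w0.
  apply: gamma_x_eq => //; first by exists w0, v.
  move=> u u' euu'; rewrite /extremal_vector -/g.
  set a : R := (gdist w0 u)%:R; set b : R := (gdist w0 u')%:R.
  have -> : 1 - g * a - (1 - g * b) = g * (b - a) by ring.
  by rewrite normrM ger0_norm // distrC gdist_edge // mulr1.
Qed.

Theorem is_gamma_min_degree (R : realType) :
  (forall w, degree e w0 <= degree e w)%N ->
  is_gamma e (#|T|%:R / (2 * #|T|.-1 - degree e w0)%:R : R).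
Proof.
move=> min_degree.
have max_transmission w : (transmission w <= transmission w0)%N.
  by have := transmission_degree w; have := transmission_degree w0; have := min_degree w; lia.
rewrite -(transmission_degree w0) addnK.
split; first by exists (extremal_vector R); exact: extremal_vector_inF.
move=> x xF; have [w card_le] := inF_transmission_gamma_x xF.
rewrite ler_pdivrMr ?ltr0n ?transmission_gt0 // mulrC; apply: le_trans card_le _.
by rewrite ler_wpM2r ?gamma_x_ge0 // ler_nat.
Qed.

End DiameterTwo.

Section Star.
Variables (n : nat) (n_gt1 : (1 < n)%N).

Let center : 'I_n := Ordinal (ltnW n_gt1).
Let leaf : 'I_n := Ordinal n_gt1.

Lemma star_simple : simple_graph (star n).
Proof. by split=> [u v|u]; rewrite /star ?eqxx // eq_sym. Qed.

Lemma star_diameter2 u v : u != v -> ~~ star n u v -> exists c, star n u c && star n c v.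
Proof.
rewrite /star negbK => neq_uv /eqP same_side; exists center.
suff /negbTE u_ne0 : val u != 0%N by rewrite /= -same_side u_ne0.
apply: contra neq_uv => u0; move: (same_side); rewrite u0 => /esym/eqP v0.
by apply/eqP/val_inj; rewrite (eqP u0) v0.
Qed.

Lemma star_leafE v : star n leaf v = (val v == 0%N).
Proof. by rewrite /star; case: (val v == 0%N). Qed.

Lemma star_degree_leaf : degree (star n) leaf = 1%N.
Proof.
rewrite /degree -(card1 center); apply: eq_card => v.
by rewrite unfold_in inE -val_eqE /=; case: (val v == 0%N).
Qed.

Lemma star_degree_gt0 w : (0 < degree (star n) w)%N.
Proof.
apply/card_gt0P; case: (eqVneq (val w) 0%N) => w_center.
  by exists leaf; rewrite unfold_in /star w_center.
by exists center; rewrite unfold_in /star /= (negbTE w_center).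
Qed.

Lemma star_is_gamma (R : realType) : is_gamma (star n) (n%:R / (2 * n - 3)%N%:R : R).
Proof.
have := @is_gamma_min_degree _ _ star_simple star_diameter2 _ leaf _ R.
rewrite card_ord star_degree_leaf (_ : (2 * n.-1 - 1 = 2 * n - 3)%N); last by lia.
apply=> //; first by move=> u v; rewrite !star_leafE.
by move=> w; rewrite star_degree_gt0.
Qed.

End Star.

Section CompleteBipartite.
Variables (m n : nat) (n_gt0 : (0 < n)%N) (n_le_m : (n <= m)%N).

Let l0 : 'I_m := Ordinal (leq_trans n_gt0 n_le_m).
Let r0 : 'I_n := Ordinal n_gt0.

Lemma Kbip_simple : simple_graph (Kbip m n).
Proof. by split=> [[i|j] [i'|j']|[i|j]]. Qed.

Lemma Kbip_diameter2 u v :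
  u != v -> ~~ Kbip m n u v -> exists c, Kbip m n u c && Kbip m n c v.
Proof. by case: u v => [i|j] [i'|j'] // _ _; [exists (inr r0)|exists (inl l0)]. Qed.

Lemma Kbip_degree v : degree (Kbip m n) v = if v is inl _ then n else m.
Proof.
rewrite /degree -sum_nat_bool_card big_sumType.
by case: v => [i|j] /=; rewrite !sum_nat_const !card_ord muln0 muln1 ?addn0.
Qed.

Lemma Kbip_is_gamma (R : realType) :
  is_gamma (Kbip m n) ((m + n)%N%:R / (2 * m + n - 2)%N%:R : R).
Proof.
have := @is_gamma_min_degree _ _ Kbip_simple Kbip_diameter2 _ (inl l0) _ R.
rewrite card_sum !card_ord Kbip_degree.
rewrite (_ : (2 * (m + n).-1 - n = 2 * m + n - 2)%N); last by lia.
apply; first by lia.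
  by case=> [i|j] [i'|j'].
by case=> [i|j]; rewrite Kbip_degree.
Qed.

End CompleteBipartite.

Theorem corollary3p5 (R : realType) :
  (forall n : nat, (2 <= n)%N ->
     is_gamma (star n) ((n%:R : R) / (2 * n - 3)%N%:R)) /\
  (forall m n : nat, (1 <= n)%N -> (n <= m)%N ->
     is_gamma (Kbip m n) (((m + n)%N%:R : R) / (2 * m + n - 2)%N%:R)).
Proof.
by split=> [n n_gt1|m n n_gt0 n_le_m]; [exact: star_is_gamma | exact: Kbip_is_gamma].
Qed.
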